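(* Let $\ell \geq 2$ and $s \geq 1$ be integers, and let $p_n/q_n$ ($n \ge 0$) be the $n$th convergent of the regular continued fraction of $$s e^{1/(\ell s)} = [s, \ell - 1, 1, 2s-1, 3\ell - 1, 1, 2s-1, 5\ell - 1, 1, 2s-1, \dots, (2k-1)\ell - 1, 1, 2s-1, \dots].$$ Then $$\sum_{n \geq 0} \left|p_n - s e^{1/(\ell s)} q_n\right| = e^{1/(\ell s)} \sqrt{\frac{\pi s}{\ell}}\, \operatorname{erf}\!\left(1/\sqrt{\ell s}\right).$$ Moreover, let $s \geq 1$ be an integer and let $p_n^*/q_n^*$ ($n\ge 0$) be the $n$th convergent of the regular continued fraction of $$s e^{1/s} = [s+1, 2s-1, 2, 1, 2s-1, 4, 1, \dots, 2s-1, 2k, 1, \dots].$$ Then $$\sum_{n \geq 0} \left|p_n^* - s e^{1/s} q_n^*\right| = e^{1/s} \sqrt{\pi s}\, \operatorname{erf}\!\left(1/\sqrt{s}\right) + s\left(1-e^{1/s}\right) - 1.$$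
   Context: The error function is $\operatorname{erf}(x) = \frac{2}{\sqrt{\pi}}\int_0^x e^{-t^2}\,dt$. For a real number $\alpha$ with regular continued fraction $[a_0,a_1,a_2,\dots]$, the $n$th convergent is $p_n/q_n = [a_0,\dots,a_n]$ in lowest terms, with $q_n>0$ (equivalently $p_{-1}=1,q_{-1}=0,p_0=a_0,q_0=1$, $p_n=a_np_{n-1}+p_{n-2}$, $q_n=a_nq_{n-1}+q_{n-2}$). *)

From Stdlib Require Import Reals ZArith Lia.
From Coquelicot Require Import Coquelicot.
Open Scope R_scope.

Definition erf (x : R) : R :=
  2 / sqrt PI * RInt (fun t => exp (- t ^ 2)) 0 x.

(* floor: for Stdlib's [up], [Int_part r = up r - 1] is exactly the floor of r. *)
Definition floorR (r : R) : Z := Int_part r.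

Fixpoint cf_rem (x : R) (n : nat) : R :=
  match n with
  | O => x
  | S m => / (cf_rem x m - IZR (floorR (cf_rem x m)))
  end.

Definition cf_digit (x : R) (n : nat) : Z := floorR (cf_rem x n).

(* ((p_n, q_n), (p_{n-1}, q_{n-1})) with p_{-1}=1, q_{-1}=0, p_0=a_0, q_0=1,
   p_n = a_n p_{n-1} + p_{n-2}, q_n = a_n q_{n-1} + q_{n-2}. *)
Fixpoint cf_pq (x : R) (n : nat) : (R * R) * (R * R) :=
  match n with
  | O => ((IZR (cf_digit x 0), 1), (1, 0))
  | S m =>
      let '((p, q), (p', q')) := cf_pq x m in
      let a := IZR (cf_digit x (S m)) in
      ((a * p + p', a * q + q'), (p, q))
  end.

Definition cf_p (x : R) (n : nat) : R := fst (fst (cf_pq x n)).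
Definition cf_q (x : R) (n : nat) : R := snd (fst (cf_pq x n)).

(* Claimed expansion [s, l-1, 1, 2s-1, 3l-1, 1, 2s-1, ..., (2k-1)l-1, 1, 2s-1, ...]. *)
Definition digits1 (l s : Z) (n : nat) : Z :=
  match n with
  | O => s
  | _ =>
    match (n mod 3)%nat with
    | 1%nat => (2 * Z.of_nat ((n + 2) / 3) - 1) * l - 1
    | 2%nat => 1
    | _ => 2 * s - 1
    end
  end%Z.

(* Claimed expansion [s+1, 2s-1, 2, 1, 2s-1, 4, 1, ..., 2s-1, 2k, 1, ...]. *)
Definition digits2 (s : Z) (n : nat) : Z :=
  match n with
  | O => s + 1
  | _ =>
    match (n mod 3)%nat with
    | 1%nat => 2 * s - 1
    | 2%nat => 2 * Z.of_nat ((n + 1) / 3)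
    | _ => 1
    end
  end%Z.

(* Put c = 1/(l s), J a b = int_0^1 t^a (1-t)^b e^(ct) dt, A k = c^k/k! J k k and
   B k = c^k/k! J k (k+1).  Up to the sign (-1)^k, the numbers -c s A k, c (s A k - B k) and
   -c B k, taken in turn, satisfy the recurrence of the convergents of the claimed expansion of
   s e^c (integration by parts), and their consecutive ratios lie in (-1, 0); this forces them
   to be the errors p_n - x q_n of the regular continued fraction and identifies the partial
   quotients.  For s e^(1/s) the same sequence with l = 1 works, started two places later.
   Finally sum |p_n - x q_n| = 2 c s sum A k = 2 c s int_0^1 e^(c t (2 - t)) dt, which the
   substitution v = sqrt c (1 - t) turns into an error-function value. *)

From Stdlib Require Import Reals ZArith Lia Lra.
From Coquelicot Require Import Coquelicot.
Open Scope R_scope.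

Lemma sum_n_R_S (a : nat -> R) n : sum_n a (S n) = sum_n a n + a (S n).
Proof. exact (sum_Sn a n). Qed.

Definition exp_term (z : R) (k : nat) : R := / INR (fact k) * z ^ k.

Definition exp_tail (K : nat) (z : R) : R := exp z - sum_n (exp_term z) K.

Lemma is_lim_seq_exp_partial z : is_lim_seq (sum_n (exp_term z)) (exp z).
Proof.
  change (is_series (exp_term z) (exp z)).
  apply is_series_Reals. unfold exp. destruct (exist_exp z) as [l Hl]. exact Hl.
Qed.

Lemma exp_term_ge0 z k : 0 <= z -> 0 <= exp_term z k.
Proof.
  intros. unfold exp_term. apply Rmult_le_pos.
  - left. apply Rinv_0_lt_compat, lt_0_INR, lt_O_fact.
  - apply pow_le; lra.
Qed.

Lemma exp_term_le z Z k : 0 <= z <= Z -> exp_term z k <= exp_term Z k.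
Proof.
  intros. unfold exp_term. apply Rmult_le_compat_l.
  - left. apply Rinv_0_lt_compat, lt_0_INR, lt_O_fact.
  - apply pow_incr; lra.
Qed.

Lemma is_lim_seq_exp_tail_partial K z :
  is_lim_seq (fun N => sum_n (exp_term z) N - sum_n (exp_term z) K) (exp_tail K z).
Proof. apply is_lim_seq_minus'; [apply is_lim_seq_exp_partial | apply is_lim_seq_const]. Qed.

Lemma exp_tail_bounds K z Z : 0 <= z <= Z -> 0 <= exp_tail K z <= exp_tail K Z.
Proof.
  intros Hz.
  assert (tail_sum : forall y N, (K <= N)%nat ->
    sum_n (exp_term y) N - sum_n (exp_term y) K = sum_n_m (exp_term y) (S K) N).
  { intros y N HN. symmetry. exact (sum_n_m_sum_n (exp_term y) K N HN). }
  split.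
  - change (Rbar_le 0 (exp_tail K z)).
    apply (is_lim_seq_le_loc (fun _ => 0) (fun N => sum_n (exp_term z) N - sum_n (exp_term z) K));
      [|apply is_lim_seq_const|apply is_lim_seq_exp_tail_partial].
    exists K. intros N HN. rewrite tail_sum by lia.
    apply Rle_trans with (sum_n_m (fun _ => 0) (S K) N).
    { right. symmetry. exact (sum_n_m_const_zero (G := R_AbelianMonoid) (S K) N). }
    apply sum_n_m_le. intros; apply exp_term_ge0; lra.
  - change (Rbar_le (exp_tail K z) (exp_tail K Z)).
    apply (is_lim_seq_le_loc (fun N => sum_n (exp_term z) N - sum_n (exp_term z) K)
                              (fun N => sum_n (exp_term Z) N - sum_n (exp_term Z) K));
      [|apply is_lim_seq_exp_tail_partial..].
    exists K. intros N HN. rewrite !tail_sum by lia.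
    apply sum_n_m_le. intros; apply exp_term_le; lra.
Qed.

Lemma is_lim_seq_exp_tail z : is_lim_seq (fun K => exp_tail K z) 0.
Proof.
  unfold exp_tail. replace 0 with (exp z - exp z) by ring.
  apply is_lim_seq_minus'; [apply is_lim_seq_const | apply is_lim_seq_exp_partial].
Qed.

Lemma is_RInt_bounds (h : R -> R) a b m M v :
  a <= b -> (forall t, a < t < b -> m <= h t <= M) -> is_RInt h a b v ->
  (b - a) * m <= v <= (b - a) * M.
Proof.
  intros Hab Hh Hv. split.
  - apply (is_RInt_le (fun _ => m) h a b); auto.
    + apply (is_RInt_const a b m).
    + intros t Ht; apply Hh, Ht.
  - apply (is_RInt_le h (fun _ => M) a b); auto.
    + apply (is_RInt_const a b M).
    + intros t Ht; apply Hh, Ht.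
Qed.

Section BetaExponentialIntegrals.
Variable c : R.
Hypothesis c_pos : 0 < c.

Definition beta_exp (a b : nat) (t : R) : R := t ^ a * (1 - t) ^ b * exp (c * t).

Definition J (a b : nat) : R := RInt (beta_exp a b) 0 1.

Lemma continuous_beta_exp a b t : continuous (beta_exp a b) t.
Proof.
  apply (@ex_derive_continuous R_AbsRing R_NormedModule). unfold beta_exp. auto_derive. trivial.
Qed.

Lemma is_RInt_J a b : is_RInt (beta_exp a b) 0 1 (J a b).
Proof.
  apply (@RInt_correct R_CompleteNormedModule), (@ex_RInt_continuous R_CompleteNormedModule).
  intros; apply continuous_beta_exp.
Qed.

Lemma J_pos a b : 0 < J a b.
Proof.
  unfold J. apply Rle_lt_trans with (RInt (fun _ => 0) 0 1).
  { rewrite RInt_const. right. cbn. ring. }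
  apply RInt_lt; try lra.
  - intros; apply continuous_beta_exp.
  - intros; apply continuous_const.
  - intros t Ht. unfold beta_exp. pose proof (exp_pos (c * t)).
    assert (0 < t ^ a) by (apply pow_lt; lra).
    assert (0 < (1 - t) ^ b) by (apply pow_lt; lra).
    apply Rmult_lt_0_compat; [apply Rmult_lt_0_compat|]; assumption.
Qed.

Lemma J_split a b : J a b = J a (S b) + J (S a) b.
Proof.
  apply (is_RInt_unique (beta_exp a b) 0 1).
  apply (is_RInt_ext (fun t => beta_exp a (S b) t + beta_exp (S a) b t)).
  - intros t _. unfold beta_exp. simpl. ring.
  - apply (is_RInt_plus (beta_exp a (S b)) (beta_exp (S a) b)); apply is_RInt_J.
Qed.

(* Integration by parts: the boundary term of [t^(a+1) (1-t)^(b+1) e^(ct)] vanishes. *)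
Lemma J_by_parts a b :
  INR (S a) * J a (S b) - INR (S b) * J (S a) b + c * J (S a) (S b) = 0.
Proof.
  set (F t := t ^ S a * (1 - t) ^ S b * exp (c * t)).
  set (g t := INR (S a) * beta_exp a (S b) t - INR (S b) * beta_exp (S a) b t
              + c * beta_exp (S a) (S b) t).
  assert (Hg : is_RInt g 0 1 (minus (F 1) (F 0))).
  { apply (@is_RInt_derive R_CompleteNormedModule).
    - intros t _. unfold F, g, beta_exp. auto_derive; trivial.
      replace (match a with 0%nat => 1 | S _ => INR a + 1 end) with (INR (S a))
        by (destruct a; simpl; ring).
      replace (match b with 0%nat => 1 | S _ => INR b + 1 end) with (INR (S b))
        by (destruct b; simpl; ring).
      simpl pow. unfold Rminus. ring.
    - intros t _. apply (@ex_derive_continuous R_AbsRing R_NormedModule).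
      unfold g, beta_exp. auto_derive. trivial. }
  replace (minus (F 1) (F 0)) with 0 in Hg by (unfold F, minus, plus, opp; simpl; ring).
  rewrite <- (is_RInt_unique g 0 1 0 Hg). symmetry. apply is_RInt_unique.
  exact (is_RInt_plus _ _ _ _ _ _
           (is_RInt_minus _ _ _ _ _ _ (is_RInt_scal _ _ _ _ _ (is_RInt_J a (S b)))
              (is_RInt_scal _ _ _ _ _ (is_RInt_J (S a) b)))
           (is_RInt_scal _ _ _ _ _ (is_RInt_J (S a) (S b)))).
Qed.

Definition W (k : nat) : R := c ^ k / INR (fact k).
Definition A (k : nat) : R := W k * J k k.
Definition B (k : nat) : R := W k * J k (S k).

Lemma W_pos k : 0 < W k.
Proof. apply Rdiv_lt_0_compat; [apply pow_lt; lra | apply lt_0_INR, lt_O_fact]. Qed.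

Lemma W_0 : W 0 = 1.
Proof. unfold W. simpl. field. Qed.

Lemma W_S k : W (S k) = W k * c / INR (S k).
Proof.
  unfold W. rewrite fact_simpl, mult_INR. simpl pow.
  field. split; [apply INR_fact_neq_0 | apply not_0_INR; lia].
Qed.

Lemma A_pos k : 0 < A k.
Proof. apply Rmult_lt_0_compat; [apply W_pos | apply J_pos]. Qed.

Lemma B_pos k : 0 < B k.
Proof. apply Rmult_lt_0_compat; [apply W_pos | apply J_pos]. Qed.

Lemma A_sub_A_S k : A k - A (S k) = 2 * B k.
Proof.
  pose proof (J_by_parts k k). pose proof (J_split k k) as Hsplit.
  assert (HJ : J (S k) (S k) = INR (S k) * (J (S k) k - J k (S k)) / c).
  { field_simplify_eq; lra. }
  unfold A, B. rewrite W_S, HJ, Hsplit. field. split; [lra | apply not_0_INR; lia].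
Qed.

Lemma B_S_add_B k : c * (B (S k) + B k) = (2 * INR k + 3) * A (S k).
Proof.
  pose proof (J_by_parts k (S k)). pose proof (J_split k (S k)) as Hsplit.
  assert (HJ : J (S k) (S (S k)) =
               (INR (S (S k)) * J (S k) (S k) - INR (S k) * J k (S (S k))) / c).
  { field_simplify_eq; lra. }
  unfold A, B. rewrite W_S, HJ, Hsplit. rewrite !S_INR. field.
  pose proof (pos_INR k). split; lra.
Qed.

Lemma A_S_lt_B s k : 0 < s -> c * s <= 1 -> s * A (S k) < B k.
Proof.
  intros Hs Hcs.
  pose proof (J_split k (S k)). pose proof (J_pos k (S (S k))).
  pose proof (W_pos k). pose proof (pos_INR k).
  assert (0 < W k * J (S k) (S k)) by (apply Rmult_lt_0_compat; [|apply J_pos]; lra).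
  unfold A, B. rewrite W_S, S_INR.
  apply Rle_lt_trans with (W k * J (S k) (S k)).
  - replace (s * (W k * c / (INR k + 1) * J (S k) (S k)))
      with ((c * s) * (W k * J (S k) (S k)) / (INR k + 1)) by (field; lra).
    apply Rmult_le_reg_r with (INR k + 1); [lra|].
    unfold Rdiv. rewrite Rmult_assoc, Rinv_l by lra. nra.
  - replace (J k (S k)) with (J k (S (S k)) + J (S k) (S k)) by lra. nra.
Qed.

Lemma A_0 : A 0 = (exp c - 1) / c.
Proof.
  unfold A. rewrite W_0, Rmult_1_l.
  apply (is_RInt_unique (beta_exp 0 0) 0 1).
  set (F t := exp (c * t) / c).
  replace ((exp c - 1) / c) with (minus (F 1) (F 0))
    by (unfold F, minus, plus, opp; simpl; rewrite Rmult_0_r, Rmult_1_r, exp_0; field; lra).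
  apply (@is_RInt_derive R_CompleteNormedModule).
  - intros t _. unfold F, beta_exp. auto_derive; trivial. simpl. field. lra.
  - intros; apply continuous_beta_exp.
Qed.

Lemma B_0 : B 0 = exp c / c ^ 2 - 1 / c - 1 / c ^ 2.
Proof.
  unfold B. rewrite W_0, Rmult_1_l.
  apply (is_RInt_unique (beta_exp 0 1) 0 1).
  set (F t := ((1 - t) / c + 1 / c ^ 2) * exp (c * t)).
  replace (exp c / c ^ 2 - 1 / c - 1 / c ^ 2) with (minus (F 1) (F 0))
    by (unfold F, minus, plus, opp; simpl; rewrite Rmult_0_r, Rmult_1_r, exp_0; field; lra).
  apply (@is_RInt_derive R_CompleteNormedModule).
  - intros t _. unfold F, beta_exp. auto_derive; trivial. simpl. field. lra.
  - intros; apply continuous_beta_exp.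
Qed.

Lemma is_RInt_A k :
  is_RInt (fun t => exp_term (c * (t * (1 - t))) k * exp (c * t)) 0 1 (A k).
Proof.
  apply (is_RInt_ext (fun t => W k * beta_exp k k t)).
  - intros t _.
    change (@eq R (W k * beta_exp k k t) (exp_term (c * (t * (1 - t))) k * exp (c * t))).
    unfold W, exp_term, beta_exp. rewrite !Rpow_mult_distr. field. apply INR_fact_neq_0.
  - apply (is_RInt_scal (beta_exp k k)), is_RInt_J.
Qed.

Lemma is_RInt_sum_A K :
  is_RInt (fun t => sum_n (exp_term (c * (t * (1 - t)))) K * exp (c * t)) 0 1 (sum_n A K).
Proof.
  induction K as [|K IH].
  - rewrite sum_O. apply (is_RInt_ext (fun t => exp_term (c * (t * (1 - t))) 0 * exp (c * t))).
    + intros t _. rewrite sum_O. reflexivity.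
    + apply is_RInt_A.
  - rewrite sum_n_R_S.
    apply (is_RInt_ext (fun t => sum_n (exp_term (c * (t * (1 - t)))) K * exp (c * t)
                                 + exp_term (c * (t * (1 - t))) (S K) * exp (c * t))).
    + intros t _. simpl. rewrite sum_n_R_S. ring.
    + apply (is_RInt_plus _ _ _ _ _ _ IH (is_RInt_A (S K))).
Qed.

(* Expand e^(c t (1 - t)) in the integrand; the integrated tail is at most e^c times the
   tail of the exponential series at [c]. *)
Lemma is_series_A I :
  is_RInt (fun t => exp (c * (t * (2 - t)))) 0 1 I -> is_series A I.
Proof.
  intros HI.
  assert (Hsum : forall K, I - exp c * exp_tail K c <= sum_n A K <= I).
  { intro K.
    pose proof (is_RInt_minus _ _ _ _ _ _ HI (is_RInt_sum_A K)) as Hdiff.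
    apply (is_RInt_bounds _ 0 1 0 (exp c * exp_tail K c)) in Hdiff; [|lra|].
    { unfold minus, plus, opp in Hdiff; simpl in Hdiff. lra. }
    intros t Ht. unfold minus, plus, opp; simpl.
    replace (c * (t * (2 - t))) with (c * (t * (1 - t)) + c * t) by ring.
    rewrite exp_plus.
    replace (exp (c * (t * (1 - t))) * exp (c * t)
             + - (sum_n (exp_term (c * (t * (1 - t)))) K * exp (c * t)))
      with (exp_tail K (c * (t * (1 - t))) * exp (c * t)) by (unfold exp_tail; ring).
    assert (Ht2 : 0 <= t * (1 - t) <= 1) by (split; nra).
    assert (Hz : 0 <= c * (t * (1 - t)) <= c) by (split; nra).
    assert (Hexp : exp (c * t) <= exp c) by (left; apply exp_increasing; nra).
    pose proof (exp_tail_bounds K _ _ Hz). pose proof (exp_pos (c * t)).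
    split.
    - apply Rmult_le_pos; lra.
    - rewrite (Rmult_comm (exp c)). apply Rmult_le_compat; lra. }
  change (is_lim_seq (sum_n A) I).
  apply (is_lim_seq_le_le (fun K => I - exp c * exp_tail K c) _ (fun _ => I)); auto.
  - replace (Finite I) with (Finite (I - exp c * 0)) by (f_equal; ring).
    apply is_lim_seq_minus'; [apply is_lim_seq_const|].
    apply (is_lim_seq_scal_l (fun K => exp_tail K c) (exp c) 0), is_lim_seq_exp_tail.
  - apply is_lim_seq_const.
Qed.

(* The substitution [v = sqrt c (1 - t)] turns [c t (2 - t)] into [c - v^2]. *)
Lemma is_RInt_exp_quadratic :
  is_RInt (fun t => exp (c * (t * (2 - t)))) 0 1 (exp c * sqrt PI / (2 * sqrt c) * erf (sqrt c)).
Proof.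
  set (g v := exp (- v ^ 2)).
  set (r := sqrt c).
  assert (Hr : 0 < r) by (apply sqrt_lt_R0; lra).
  assert (Hrr : r * r = c) by (apply sqrt_sqrt; lra).
  assert (Hg : is_RInt g r 0 (- RInt g 0 r)).
  { apply (@is_RInt_swap R_CompleteNormedModule), (@RInt_correct R_CompleteNormedModule),
      (@ex_RInt_continuous R_CompleteNormedModule).
    intros; apply (@ex_derive_continuous R_AbsRing R_NormedModule).
    unfold g. auto_derive. trivial. }
  replace r with (- r * 0 + r) in Hg at 1 by ring.
  replace 0 with (- r * 1 + r) in Hg at 2 by ring.
  apply is_RInt_comp_lin, (is_RInt_scal _ _ _ (- exp c / r)) in Hg.
  replace (exp c * sqrt PI / (2 * r) * erf r)
    with (scal (- exp c / r) (- RInt g 0 r)).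
  - refine (is_RInt_ext _ _ 0 1 _ _ Hg).
    intros t _. change (- exp c / r * (- r * g (- r * t + r)) = exp (c * (t * (2 - t)))).
    unfold g. replace (c * (t * (2 - t))) with (c + - (- r * t + r) ^ 2) by (rewrite <- Hrr; ring).
    rewrite exp_plus. field. lra.
  - unfold erf. change (- exp c / r * - RInt g 0 r
                        = exp c * sqrt PI / (2 * r) * (2 / sqrt PI * RInt g 0 r)).
    pose proof (sqrt_lt_R0 PI PI_RGT_0). field. lra.
Qed.

Lemma is_series_A_erf : is_series A (exp c * sqrt PI / (2 * sqrt c) * erf (sqrt c)).
Proof. apply is_series_A, is_RInt_exp_quadratic. Qed.

End BetaExponentialIntegrals.

Lemma nat_mod3_ind (P : nat -> Prop) :
  (forall k, P (3 * k)%nat) -> (forall k, P (3 * k + 1)%nat) -> (forall k, P (3 * k + 2)%nat) ->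
  forall n, P n.
Proof.
  intros H0 H1 H2 n. rewrite (Nat.div_mod n 3) by lia.
  pose proof (Nat.mod_upper_bound n 3) as Hr.
  destruct (n mod 3)%nat as [|[|[|r]]]; [rewrite Nat.add_0_r; apply H0 | apply H1 | apply H2 | lia].
Qed.

Section GroupingByThree.
Variable f : nat -> R.
Hypothesis f_ge0 : forall n, 0 <= f n.

Let g k := f (3 * k)%nat + f (3 * k + 1)%nat + f (3 * k + 2)%nat.

Lemma sum_n_group3 K : sum_n f (3 * K + 2) = sum_n g K :> R.
Proof.
  induction K as [|K IH].
  - change (3 * 0 + 2)%nat with 2%nat. rewrite !sum_n_R_S, !sum_O. unfold g. simpl. ring.
  - replace (3 * S K + 2)%nat with (S (S (S (3 * K + 2)))) by lia.
    rewrite !sum_n_R_S, IH.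
    replace (S (S (S (3 * K + 2)))) with (3 * S K + 2)%nat by lia.
    replace (S (S (3 * K + 2))) with (3 * S K + 1)%nat by lia.
    replace (S (3 * K + 2)) with (3 * S K)%nat by lia.
    unfold g. ring.
Qed.

Lemma sum_n_nondecr m n : (m <= n)%nat -> sum_n f m <= sum_n f n.
Proof. induction 1; [lra|]. rewrite sum_n_R_S. pose proof (f_ge0 (S m0)). lra. Qed.

Lemma is_lim_seq_div3 (u : nat -> R) l : is_lim_seq u l -> is_lim_seq (fun N => u (N / 3)%nat) l.
Proof.
  intros H. eapply filterlim_comp; [|exact H].
  intros P [M HM]. exists (3 * M)%nat. intros n Hn. apply HM.
  apply Nat.div_le_lower_bound; lia.
Qed.

(* [sum_n f N] lies between the grouped partial sums of index [N/3 - 1] and [N/3]. *)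
Lemma is_series_group3 L : is_series g L -> is_series f L.
Proof.
  intros H.
  assert (Hg0 : is_lim_seq g 0) by (apply ex_series_lim_0; eexists; exact H).
  change (is_lim_seq (sum_n f) L).
  apply is_lim_seq_le_le with (u := fun N => sum_n g (N / 3)%nat - g (N / 3)%nat)
                              (w := fun N => sum_n g (N / 3)%nat).
  - intro N. pose proof (Nat.div_mod N 3 ltac:(lia)).
    pose proof (Nat.mod_upper_bound N 3 ltac:(lia)).
    rewrite <- sum_n_group3. split; [|apply sum_n_nondecr; lia].
    destruct (N / 3)%nat as [|K] eqn:HK.
    + replace (sum_n f (3 * 0 + 2)) with (g 0%nat) by (rewrite sum_n_group3, sum_O; reflexivity).
      pose proof (sum_n_nondecr 0 N (Nat.le_0_l N)). pose proof (f_ge0 0). rewrite sum_O in *. lra.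
    + rewrite sum_n_group3, sum_n_R_S, <- sum_n_group3.
      pose proof (sum_n_nondecr (3 * K + 2) N ltac:(lia)). lra.
  - replace (Finite L) with (Finite (L - 0)) by (f_equal; ring).
    apply is_lim_seq_minus'; apply is_lim_seq_div3; assumption.
  - apply is_lim_seq_div3, H.
Qed.

End GroupingByThree.

Lemma is_series_shift2 (a : nat -> R) L :
  is_series a L -> is_series (fun k => a (S (S k))) (L - a 0%nat - a 1%nat).
Proof.
  intro H. apply (is_series_incr_1 (fun k => a (S k))), (is_series_incr_1 a).
  match goal with |- is_series _ ?v => assert (E : v = L) end.
  { unfold plus; simpl. ring. }
  rewrite E. exact H.
Qed.

Definition cf_err (x : R) (n : nat) : R := cf_p x n - x * cf_q x n.

Definition cf_err_prev (x : R) (n : nat) : R :=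
  fst (snd (cf_pq x n)) - x * snd (snd (cf_pq x n)).

Lemma cf_err_S x n : cf_err x (S n) = IZR (cf_digit x (S n)) * cf_err x n + cf_err_prev x n.
Proof.
  unfold cf_err, cf_err_prev, cf_p, cf_q. simpl.
  destruct (cf_pq x n) as [[p q] [p' q']]. simpl. ring.
Qed.

Lemma cf_err_prev_S x n : cf_err_prev x (S n) = cf_err x n.
Proof.
  unfold cf_err, cf_err_prev, cf_p, cf_q. simpl.
  destruct (cf_pq x n) as [[p q] [p' q']]. reflexivity.
Qed.

Lemma floorR_eq r z : IZR z <= r < IZR z + 1 -> floorR r = z.
Proof.
  intros [H1 H2]. unfold floorR, Int_part.
  rewrite <- (tech_up r (z + 1)); [lia | rewrite plus_IZR; lra ..].
Qed.

(* [f] is meant to be [1, p_0 - x q_0, p_1 - x q_1, ...], whose ratios give the complete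
   quotients [x_(n+1) = - f n / f (n+1)]; the ratio condition then says [a n = floor x_n]. *)
Section Recognition.
Variables (x : R) (a : nat -> Z) (f : nat -> R).
Hypothesis f_0 : f 0%nat = 1.
Hypothesis f_1 : f 1%nat = IZR (a 0%nat) - x.
Hypothesis f_rec : forall n, f (S (S n)) = IZR (a (S n)) * f (S n) + f n.
Hypothesis f_ratio : forall n, 0 < - f (S n) / f n < 1.

Let f_S_neq0 n : f (S n) <> 0.
Proof.
  intros E. pose proof (f_ratio (S n)) as H. rewrite E in H.
  unfold Rdiv in H. rewrite Rinv_0, Rmult_0_r in H. lra.
Qed.

Lemma cf_recognize_invariant n :
  cf_digit x n = a n /\ cf_err x n = f (S n) /\ cf_err_prev x n = f n
  /\ cf_rem x (S n) = - f n / f (S n).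
Proof.
  induction n as [|n [Dn [En [Pn Rn]]]].
  - pose proof (f_ratio 0) as Hx. rewrite f_0, f_1, Rdiv_1_r in Hx.
    assert (D0 : cf_digit x 0 = a 0%nat) by (apply floorR_eq; simpl; lra).
    repeat split; auto.
    + unfold cf_err, cf_p, cf_q. simpl. rewrite D0, f_1. ring.
    + unfold cf_err_prev. simpl. rewrite f_0. ring.
    + simpl. change (floorR x) with (cf_digit x 0). rewrite D0, f_0, f_1. field. lra.
  - pose proof (f_S_neq0 n). pose proof (f_S_neq0 (S n)).
    assert (Hfrac : cf_rem x (S n) - IZR (a (S n)) = - f (S (S n)) / f (S n)).
    { rewrite Rn, f_rec. field. auto. }
    assert (D : cf_digit x (S n) = a (S n)).
    { apply floorR_eq. pose proof (f_ratio (S n)). lra. }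
    repeat split; auto.
    + rewrite cf_err_S, D, En, Pn, f_rec. reflexivity.
    + rewrite cf_err_prev_S. exact En.
    + change (cf_rem x (S (S n))) with (/ (cf_rem x (S n) - IZR (cf_digit x (S n)))).
      rewrite D, Hfrac. field. auto.
Qed.

Lemma cf_recognize n : cf_digit x n = a n /\ cf_err x n = f (S n).
Proof. pose proof (cf_recognize_invariant n). tauto. Qed.

End Recognition.

Lemma IZR_digits1_3k1 l s k :
  IZR (digits1 (Z.of_nat l) (Z.of_nat s) (3 * k + 1)) = (2 * INR k + 1) * INR l - 1.
Proof.
  replace (3 * k + 1)%nat with (S (3 * k)) by lia. unfold digits1.
  replace (S (3 * k) mod 3)%nat with 1%nat by (apply Nat.mod_unique with k; lia).
  replace ((S (3 * k) + 2) / 3)%nat with (S k) by (apply Nat.div_unique with 0%nat; lia).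
  rewrite minus_IZR, mult_IZR, minus_IZR, mult_IZR, <- !INR_IZR_INZ, S_INR. simpl. ring.
Qed.

Lemma digits1_3k2 l s k : digits1 l s (3 * k + 2) = 1%Z.
Proof.
  replace (3 * k + 2)%nat with (S (3 * k + 1)) by lia. unfold digits1.
  replace (S (3 * k + 1) mod 3)%nat with 2%nat by (apply Nat.mod_unique with k; lia).
  reflexivity.
Qed.

Lemma digits1_3Sk l s k : digits1 l s (3 * S k) = (2 * s - 1)%Z.
Proof.
  replace (3 * S k)%nat with (S (3 * k + 2)) by lia. unfold digits1.
  replace (S (3 * k + 2) mod 3)%nat with 0%nat by (apply Nat.mod_unique with (S k); lia).
  reflexivity.
Qed.

Lemma digits2_digits1 s n : digits2 s (S n) = digits1 1 s (S (S (S n))).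
Proof.
  revert n. apply nat_mod3_ind; intro k; unfold digits1, digits2.
  - replace (S (3 * k) mod 3)%nat with 1%nat by (apply Nat.mod_unique with k; lia).
    replace (S (S (S (3 * k))) mod 3)%nat with 0%nat by (apply Nat.mod_unique with (S k); lia).
    reflexivity.
  - replace (S (3 * k + 1) mod 3)%nat with 2%nat by (apply Nat.mod_unique with k; lia).
    replace (S (S (S (3 * k + 1))) mod 3)%nat with 1%nat by (apply Nat.mod_unique with (S k); lia).
    replace ((S (3 * k + 1) + 1) / 3)%nat with (S k) by (apply Nat.div_unique with 0%nat; lia).
    replace ((S (S (S (3 * k + 1))) + 2) / 3)%nat with (S (S k))
      by (apply Nat.div_unique with 0%nat; lia).
    rewrite !Nat2Z.inj_succ. lia.
  - replace (S (3 * k + 2) mod 3)%nat with 0%nat by (apply Nat.mod_unique with (S k); lia).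
    replace (S (S (S (3 * k + 2))) mod 3)%nat with 2%nat by (apply Nat.mod_unique with (S k); lia).
    reflexivity.
Qed.

Lemma ratio_in_01 p q : 0 < p < q -> 0 < p / q < 1.
Proof.
  intros [Hp Hpq]. split; [apply Rdiv_lt_0_compat; lra|].
  apply (Rmult_lt_reg_r q); [lra|]. unfold Rdiv. rewrite Rmult_assoc, Rinv_l; lra.
Qed.

Lemma Rabs_sign_mult k y : Rabs ((-1) ^ k * y) = Rabs y.
Proof. rewrite Rabs_mult, pow_1_abs. ring. Qed.

Section ErrorTerms.
Variables l s : nat.
Hypothesis l_ge1 : (1 <= l)%nat.
Hypothesis s_ge1 : (1 <= s)%nat.

Let c := / (INR l * INR s).

Let INR_l_ge1 : 1 <= INR l.
Proof. apply (le_INR 1); lia. Qed.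

Let INR_s_ge1 : 1 <= INR s.
Proof. apply (le_INR 1); lia. Qed.

Let c_pos : 0 < c.
Proof. apply Rinv_0_lt_compat. nra. Qed.

Let sign_neq0 k : (-1) ^ k <> 0.
Proof. apply pow_nonzero. lra. Qed.

Let sA_pos k : 0 < INR s * A c k.
Proof. pose proof (A_pos c c_pos k). nra. Qed.

Let twice_B_lt_sA k : 2 * B c k < INR s * A c k.
Proof.
  pose proof (A_sub_A_S c c_pos k). pose proof (A_pos c c_pos (S k)).
  pose proof (A_pos c c_pos k). nra.
Qed.

(* [err0 k], [err1 k], [err2 k] will be [p_n - x q_n] for [n = 3k, 3k+1, 3k+2] in the
   expansion of [s e^(1/(ls))]. *)
Definition err0 (k : nat) : R := - (-1) ^ k * (c * INR s) * A c k.
Definition err2 (k : nat) : R := - (-1) ^ k * c * B c k.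
Definition err1 (k : nat) : R := err2 k - err0 k.

Definition err (n : nat) : R :=
  match (n mod 3)%nat with
  | 0%nat => err0 (n / 3)
  | 1%nat => err1 (n / 3)
  | _ => err2 (n / 3)
  end.

Lemma err_3k_add k r : (r < 3)%nat ->
  err (3 * k + r) = match r with 0%nat => err0 k | 1%nat => err1 k | _ => err2 k end.
Proof.
  intros Hr. unfold err.
  replace ((3 * k + r) mod 3)%nat with r by (apply Nat.mod_unique with k; lia).
  replace ((3 * k + r) / 3)%nat with k by (apply Nat.div_unique with r; lia).
  reflexivity.
Qed.

Lemma err_3k k : err (3 * k) = err0 k.
Proof. rewrite <- (Nat.add_0_r (3 * k)). apply (err_3k_add k 0); lia. Qed.

Lemma err_3k1 k : err (3 * k + 1) = err1 k.
Proof. apply (err_3k_add k 1); lia. Qed.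

Lemma err_3k2 k : err (3 * k + 2) = err2 k.
Proof. apply (err_3k_add k 2); lia. Qed.

Lemma err0_S k : err0 (S k) = 2 * INR s * err2 k - err0 k.
Proof.
  pose proof (A_sub_A_S c c_pos k). unfold err0, err2. simpl pow.
  replace (A c (S k)) with (A c k - 2 * B c k) by lra. ring.
Qed.

Lemma err1_S k : err1 (S k) = ((2 * INR k + 3) * INR l - 1) * err0 (S k) + err2 k.
Proof.
  pose proof (B_S_add_B c c_pos k). unfold err1, err0, err2. simpl pow.
  replace (B c (S k)) with (((2 * INR k + 3) * A c (S k) - c * B c k) / c)
    by (field_simplify_eq; lra).
  replace (INR l) with (/ (c * INR s)) by (unfold c; field; lra).
  field. lra.
Qed.

Lemma err_rec n :
  err (S (S n)) = IZR (digits1 (Z.of_nat l) (Z.of_nat s) (S (S n))) * err (S n) + err n.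
Proof.
  revert n. apply nat_mod3_ind; intro k.
  - replace (S (S (3 * k))) with (3 * k + 2)%nat by lia.
    replace (S (3 * k)) with (3 * k + 1)%nat by lia.
    rewrite digits1_3k2, err_3k, err_3k1, err_3k2. unfold err1. ring.
  - replace (S (S (3 * k + 1))) with (3 * S k)%nat by lia.
    replace (S (3 * k + 1)) with (3 * k + 2)%nat by lia.
    rewrite digits1_3Sk, err_3k, err_3k1, err_3k2, err0_S.
    rewrite minus_IZR, mult_IZR, <- INR_IZR_INZ. unfold err1. ring.
  - replace (S (S (3 * k + 2))) with (3 * S k + 1)%nat by lia.
    replace (S (3 * k + 2)) with (3 * S k)%nat by lia.
    rewrite IZR_digits1_3k1, err_3k, err_3k1, err_3k2, err1_S, S_INR. ring.
Qed.

Lemma err_ratio n : 0 < - err (S n) / err n < 1.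
Proof.
  assert (HB : forall k, 0 < B c k) by (intro; apply B_pos, c_pos).
  revert n. apply nat_mod3_ind; intro k.
  - replace (S (3 * k)) with (3 * k + 1)%nat by lia. rewrite err_3k, err_3k1.
    replace (- err1 k / err0 k) with ((INR s * A c k - B c k) / (INR s * A c k)).
    + apply ratio_in_01. pose proof (twice_B_lt_sA k). pose proof (HB k). lra.
    + unfold err1, err0, err2. field. pose proof (sA_pos k). repeat split; auto; nra.
  - replace (S (3 * k + 1)) with (3 * k + 2)%nat by lia. rewrite err_3k1, err_3k2.
    replace (- err2 k / err1 k) with (B c k / (INR s * A c k - B c k)).
    + apply ratio_in_01. pose proof (twice_B_lt_sA k). pose proof (HB k). lra.
    + unfold err1, err0, err2.
      replace (- (-1) ^ k * c * B c k - - (-1) ^ k * (c * INR s) * A c k)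
        with ((-1) ^ k * c * (INR s * A c k - B c k)) by ring.
      field. pose proof (twice_B_lt_sA k). pose proof (HB k). repeat split; auto; lra.
  - replace (S (3 * k + 2)) with (3 * S k)%nat by lia. rewrite err_3k, err_3k2.
    replace (- err0 (S k) / err2 k) with (INR s * A c (S k) / B c k).
    + apply ratio_in_01. split; [apply sA_pos|]. apply A_S_lt_B; [exact c_pos | lra |].
      unfold c. apply (Rmult_le_reg_l (INR l)); [lra|].
      field_simplify; [|lra..]. lra.
    + unfold err0, err2. simpl pow. field. pose proof (HB k). repeat split; auto; lra.
Qed.

Lemma err_0 : err 0 = INR s - INR s * exp c.
Proof.
  change (err0 0 = INR s - INR s * exp c).
  unfold err0. rewrite A_0 by exact c_pos. simpl. field. lra.
Qed.

Lemma err_2 : err 2 = 1 + INR l * err 0.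
Proof.
  rewrite err_0. change (err2 0 = 1 + INR l * (INR s - INR s * exp c)).
  unfold err2. rewrite B_0 by exact c_pos.
  replace (INR l) with (/ (c * INR s)) by (unfold c; field; lra).
  simpl. field. lra.
Qed.

Lemma err_1 : err 1 = 1 + (INR l - 1) * err 0.
Proof. change (err 2 - err 0 = 1 + (INR l - 1) * err 0). rewrite err_2. ring. Qed.

Lemma err_0_bounds : (2 <= l)%nat -> 0 < - err 0 < 1.
Proof.
  intros Hl. assert (Hl2 : 2 <= INR l) by (apply (le_INR 2); lia).
  assert (Hneg : err 0 < 0).
  { rewrite err_0. pose proof (exp_ineq1 c (Rgt_not_eq _ _ c_pos)). nra. }
  pose proof (err_ratio 0) as [Hr _]. rewrite err_1 in Hr.
  assert (H1 : 0 < 1 + (INR l - 1) * err 0).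
  { replace (1 + (INR l - 1) * err 0) with (- (1 + (INR l - 1) * err 0) / err 0 * (- err 0))
      by (field; lra).
    apply Rmult_lt_0_compat; lra. }
  nra.
Qed.

Lemma Rabs_err_sum k :
  Rabs (err0 k) + Rabs (err1 k) + Rabs (err2 k) = 2 * c * INR s * A c k.
Proof.
  pose proof (B_pos c c_pos k). pose proof (sA_pos k). pose proof (twice_B_lt_sA k).
  unfold err1, err0, err2.
  replace (- (-1) ^ k * (c * INR s) * A c k) with ((-1) ^ k * - (c * INR s * A c k)) by ring.
  replace (- (-1) ^ k * c * B c k) with ((-1) ^ k * - (c * B c k)) by ring.
  replace ((-1) ^ k * - (c * B c k) - (-1) ^ k * - (c * INR s * A c k))
    with ((-1) ^ k * (c * (INR s * A c k - B c k))) by ring.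
  rewrite !Rabs_sign_mult, !Rabs_Ropp, !Rabs_pos_eq; [ring | ..];
    rewrite ?Rmult_assoc; apply Rmult_le_pos; lra.
Qed.

Lemma is_series_abs_err :
  is_series (fun n => Rabs (err n))
    (exp c * sqrt (PI * INR s / INR l) * erf (/ sqrt (INR l * INR s))).
Proof.
  apply is_series_group3; [intro; apply Rabs_pos|].
  replace (exp c * sqrt (PI * INR s / INR l) * erf (/ sqrt (INR l * INR s)))
    with (2 * c * INR s * (exp c * sqrt PI / (2 * sqrt c) * erf (sqrt c))).
  - eapply is_series_ext; [|apply (is_series_scal (2 * c * INR s) _ _ (is_series_A_erf c c_pos))].
    intro k. rewrite err_3k, err_3k1, err_3k2. symmetry. apply Rabs_err_sum.
  - assert (Hq : 0 < sqrt (INR l * INR s)) by (apply sqrt_lt_R0; nra).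
    assert (Hqq : sqrt (INR l * INR s) * sqrt (INR l * INR s) = INR l * INR s)
      by (apply sqrt_sqrt; nra).
    set (q := sqrt (INR l * INR s)) in *.
    assert (E : INR s / q * (INR s / q) = INR s / INR l).
    { replace (INR s / q * (INR s / q)) with (INR s * INR s / (q * q)) by (field; lra).
      rewrite Hqq. field. lra. }
    replace (PI * INR s / INR l) with (PI * (INR s / q * (INR s / q))) by (rewrite E; field; lra).
    rewrite sqrt_mult_alt, sqrt_square by (pose proof PI_RGT_0; try apply Rdiv_le_0_compat; lra).
    unfold c. rewrite sqrt_inv. fold q. rewrite <- Hqq. field. lra.
Qed.

End ErrorTerms.

Lemma cf_s_exp_inv_ls (l s : nat) : (2 <= l)%nat -> (1 <= s)%nat ->
  let x := INR s * exp (/ (INR l * INR s)) in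
  (forall n : nat, cf_digit x n = digits1 (Z.of_nat l) (Z.of_nat s) n) /\
  is_series (fun n : nat => Rabs (cf_p x n - x * cf_q x n))
    (exp (/ (INR l * INR s)) * sqrt (PI * INR s / INR l) * erf (/ sqrt (INR l * INR s))).
Proof.
  intros Hl Hs x.
  set (f n := match n with 0%nat => 1 | S m => err l s m end).
  assert (Hcf : forall n, cf_digit x n = digits1 (Z.of_nat l) (Z.of_nat s) n
                          /\ cf_err x n = err l s n).
  { apply (cf_recognize x _ f); [reflexivity | | |].
    - simpl f. rewrite err_0 by lia. unfold x. simpl digits1. rewrite <- INR_IZR_INZ. ring.
    - intros [|m]; simpl f.
      + rewrite err_1 by lia. change 1%nat with (3 * 0 + 1)%nat at 1.
        rewrite (IZR_digits1_3k1 l s 0). simpl. ring.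
      + apply err_rec; lia.
    - intros [|m]; simpl f.
      + rewrite Rdiv_1_r. apply err_0_bounds; lia.
      + apply err_ratio; lia. }
  split; [intro n; apply Hcf|].
  apply (is_series_ext (fun n => Rabs (err l s n))).
  - intro n. f_equal. symmetry. apply Hcf.
  - apply is_series_abs_err; lia.
Qed.

Lemma cf_s_exp_inv_s (s : nat) : (1 <= s)%nat ->
  let x := INR s * exp (/ INR s) in
  (forall n : nat, cf_digit x n = digits2 (Z.of_nat s) n) /\
  is_series (fun n : nat => Rabs (cf_p x n - x * cf_q x n))
    (exp (/ INR s) * sqrt (PI * INR s) * erf (/ sqrt (INR s))
       + INR s * (1 - exp (/ INR s)) - 1).
Proof.
  intros Hs x.
  assert (Hc : INR 1 * INR s = INR s) by (simpl; ring).
  set (f n := err 1 s (S n)).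
  assert (Hcf : forall n, cf_digit x n = digits2 (Z.of_nat s) n /\ cf_err x n = err 1 s (S (S n))).
  { apply (cf_recognize x _ f).
    - unfold f. rewrite err_1 by lia. simpl. ring.
    - unfold f. rewrite err_2, err_0, Hc by lia. unfold x. simpl digits2.
      rewrite plus_IZR, <- INR_IZR_INZ. simpl. ring.
    - intro n. unfold f. rewrite digits2_digits1. apply err_rec; lia.
    - intro n. apply err_ratio; lia. }
  split; [intro n; apply Hcf|].
  apply (is_series_ext (fun n => Rabs (err 1 s (S (S n))))).
  { intro n. f_equal. symmetry. apply Hcf. }
  pose proof (is_series_abs_err 1 s ltac:(lia) Hs) as Hser.
  rewrite Hc in Hser. replace (PI * INR s / INR 1) with (PI * INR s) in Hser by (simpl; field).
  apply is_series_shift2 in Hser.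
  replace (exp (/ INR s) * sqrt (PI * INR s) * erf (/ sqrt (INR s))
           + INR s * (1 - exp (/ INR s)) - 1)
    with (exp (/ INR s) * sqrt (PI * INR s) * erf (/ sqrt (INR s))
          - Rabs (err 1 s 0) - Rabs (err 1 s 1)); [exact Hser|].
  rewrite err_1, err_0, Hc by lia.
  replace (1 + (INR 1 - 1) * (INR s - INR s * exp (/ INR s))) with 1 by (simpl; ring).
  assert (Hexp : 1 < exp (/ INR s)).
  { rewrite <- exp_0. apply exp_increasing, Rinv_0_lt_compat, lt_0_INR. lia. }
  assert (1 <= INR s) by (apply (le_INR 1); lia).
  rewrite Rabs_R1, Rabs_left by nra. ring.
Qed.

Theorem theorem3 :
  (forall l s : nat, (2 <= l)%nat -> (1 <= s)%nat ->
     let x := INR s * exp (/ (INR l * INR s)) in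
     (forall n : nat, cf_digit x n = digits1 (Z.of_nat l) (Z.of_nat s) n) /\
     is_series (fun n : nat => Rabs (cf_p x n - x * cf_q x n))
       (exp (/ (INR l * INR s)) * sqrt (PI * INR s / INR l)
          * erf (/ sqrt (INR l * INR s)))) /\
  (forall s : nat, (1 <= s)%nat ->
     let x := INR s * exp (/ INR s) in
     (forall n : nat, cf_digit x n = digits2 (Z.of_nat s) n) /\
     is_series (fun n : nat => Rabs (cf_p x n - x * cf_q x n))
       (exp (/ INR s) * sqrt (PI * INR s) * erf (/ sqrt (INR s))
          + INR s * (1 - exp (/ INR s)) - 1)).
Proof. split; [exact cf_s_exp_inv_ls | exact cf_s_exp_inv_s]. Qed.
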